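(* Let $\langle B,\wedge,{}'\rangle$ be an algebra with $\wedge$ binary and ${}'$ unary satisfying $x\wedge(y\wedge z)\approx (y\wedge x)\wedge z$ and $x\approx (x'\wedge y)'\wedge(x'\wedge y')'$. Then $x\wedge[y\wedge(z\wedge u)]=y\wedge[x\wedge(z\wedge u)]$ for all $x,y,z,u\in B$. *)

From Corelib Require Import ssreflect.

(* The two axioms force the meet to be commutative; the first axiom then reads
   x ∧ (y ∧ z) = (x ∧ y) ∧ z, so the meet is a commutative semigroup operation.
   Commutativity comes from the second axiom, which splits every x as p ∧ q
   with p = (x' ∧ y)' and q = (x' ∧ y')'.  One shows in turn that such a factor
   p commutes with x, that every element commutes with every complement, and
   finally, splitting y into two complements, that x and y commute. *)

Section MeetCompl.

Variables (B : Type) (meet : B -> B -> B) (c : B -> B).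

Local Notation "x ⊓ y" := (meet x y) (at level 40, left associativity).

Hypothesis meetA_swap : forall x y z, x ⊓ (y ⊓ z) = (y ⊓ x) ⊓ z.
Hypothesis split_compl : forall x y, x = c (c x ⊓ y) ⊓ c (c x ⊓ c y).

Definition commute x y := x ⊓ y = y ⊓ x.

Lemma commute_meetCA x y z : commute x y -> x ⊓ (y ⊓ z) = y ⊓ (x ⊓ z).
Proof. by rewrite /commute !meetA_swap => ->. Qed.

Lemma split_complM x y z : c (c x ⊓ c y) ⊓ (c (c x ⊓ y) ⊓ z) = x ⊓ z.
Proof. by rewrite meetA_swap -split_compl. Qed.

Lemma split_compl_meet x y : c (c (c x ⊓ y) ⊓ (c x ⊓ c y)) ⊓ c x = c x ⊓ y.
Proof. by rewrite [RHS](split_compl (c x ⊓ y) (c x ⊓ c y)) -(split_compl x y). Qed.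

Lemma compl_meet_exchange x y z :
  c x ⊓ (c (c (c x ⊓ y) ⊓ (c x ⊓ c y)) ⊓ z) = y ⊓ (c x ⊓ z).
Proof. by rewrite {1}(split_compl x y) split_complM meetA_swap. Qed.

Lemma compl_meet_dup x y : c x ⊓ (c x ⊓ y) = y ⊓ (c x ⊓ c x).
Proof. by rewrite -(split_compl_meet x y) compl_meet_exchange. Qed.

Lemma commute_split_factor x y : commute (c (c x ⊓ y)) x.
Proof. by rewrite /commute {2}(split_compl x y) compl_meet_dup split_complM. Qed.

Lemma commute_compl_meet a x b : commute (c (a ⊓ (c x ⊓ b))) x.
Proof. rewrite -(compl_meet_exchange x a b); exact: commute_split_factor. Qed.

Lemma commute_compl_meet_compl a y z : commute (c (a ⊓ y)) (c y ⊓ z).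
Proof. rewrite /commute {1 4}(split_compl y z); exact: commute_compl_meet. Qed.

Lemma compl_meet_swap a b y z :
  c (a ⊓ (b ⊓ y)) ⊓ (c y ⊓ z) = z ⊓ (c y ⊓ c (a ⊓ (b ⊓ y))).
Proof. by rewrite (meetA_swap a b y) commute_compl_meet_compl meetA_swap. Qed.

Lemma commute_compl x y : commute x (c y).
Proof.
rewrite /commute -(split_complM x (c (c y) ⊓ y) (c y)).
rewrite (commute_compl_meet (c x) (c y) y) -compl_meet_swap.
by rewrite (commute_meetCA _ _ _ (commute_compl_meet _ _ _)) -split_compl.
Qed.

Lemma meetC x y : commute x y.
Proof.
rewrite /commute {1}(split_compl y (c y ⊓ c x)) (compl_meet_dup y (c x)).
rewrite -(commute_meetCA _ _ _ (commute_split_factor x _)) meetA_swap commute_compl.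
by rewrite -(commute_split_factor x) -compl_meet_dup split_complM.
Qed.

Lemma meetCA x y z : x ⊓ (y ⊓ z) = y ⊓ (x ⊓ z).
Proof. exact: commute_meetCA _ _ _ (meetC x y). Qed.

End MeetCompl.

Theorem lemma6p13 (B : Type) (meet : B -> B -> B) (c : B -> B)
  (H1 : forall x y z : B, meet x (meet y z) = meet (meet y x) z)
  (H2 : forall x y : B, x = meet (c (meet (c x) y)) (c (meet (c x) (c y)))) :
  forall x y z u : B, meet x (meet y (meet z u)) = meet y (meet x (meet z u)).
Proof. move=> x y z u; exact: meetCA. Qed.
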